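(* Let $y\in V(D^+)$ and let $v_j,v_i$ be two descendants of $y$ in $D^+$ with $d_s(v_j)\le d_s(v_i)$. If $g^*(v_j)\neq\infty$, then $\min_{u\prec y} g(v_i,u)\ge g^*(v_j)$.
   Context: $G=(V,E,w)$ is a simple, connected, undirected graph with positive edge lengths, $s,t\in V$, $d(\cdot,\cdot)$ the shortest path distance in $G$, $d_s(v)=d(s,v)$. $D$ is the union of all shortest $st$-paths of $G$, and $D^+$ is the directed acyclic graph obtained from $D$ by orienting every edge toward $t$. $x\prec y$ means $x$ is an ancestor of $y$ in $D^+$ (a directed path of positive length from $x$ to $y$ exists); a descendant of $y$ is a vertex $v$ with $y\prec v$. For $x\neq s$, $v\neq x$ is an $s$-dominator of $x$ if every directed path from $s$ to $x$ in $D^+$ contains $v$, and $I_s(x)$ is the $s$-dominator of $x$ closest to $x$ (every other $s$-dominator of $x$ is an $s$-dominator of $I_s(x)$). Symmetrically, for $x\neq t$, $v\neq x$ is a $t$-dominator of $x$ if every directed path from $x$ to $t$ in $D^+$ contains $v$, and $I_t(x)$ is the $t$-dominator closest to $x$. For $x\neq s$, $C(x)=\{v: I_s(x)\prec v\prec x\}$. For $x\neq s$ and $y\in V(D^+)$, $g(x,y)=d(y,x)$ if $y\in C(x)$ and $x\prec I_t(y)$, and $g(x,y)=\infty$ otherwise; $g^*(x)=\min_y g(x,y)$. A minimum over the empty set is $\infty$. *)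

From HB Require Import structures.
From mathcomp Require Import all_boot all_order all_algebra.
From mathcomp Require Import boolp classical_sets reals constructive_ereal.
Set Implicit Arguments. Unset Strict Implicit. Unset Printing Implicit Defensive.
Import Order.TTheory GRing.Theory Num.Theory.
Local Open Scope ring_scope.

Section SPDAG.
Variables (R : realType) (T : finType) (adj : rel T) (w : T -> T -> R)
          (d : T -> T -> R) (s t : T).

Fixpoint wlen (x : T) (p : seq T) : R :=
  match p with [::] => 0 | y :: p' => w x y + wlen y p' end.

Definition is_sp_dist : Prop :=
  forall x y,
    (forall p, path adj x p -> last x p = y -> d x y <= wlen x p) /\
    (exists p, [/\ path adj x p, last x p = y & wlen x p = d x y]).

Definition shortest_st (p : seq T) : Prop :=
  [/\ path adj s p, last s p = t & wlen s p = d s t].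

(* vertices of D (= V(D^+)) : vertices lying on some shortest st-path *)
Definition inD (v : T) : Prop := exists p, shortest_st p /\ v \in s :: p.

(* arcs of D^+ : consecutive vertices u, v (in the direction s -> t) of
   some shortest st-path *)
Definition arc (u v : T) : Prop :=
  exists p q1 q2, shortest_st p /\ s :: p = q1 ++ u :: v :: q2.

Fixpoint dwalk (x : T) (p : seq T) : Prop :=
  match p with [::] => True | y :: p' => arc x y /\ dwalk y p' end.

(* x ≺ y : a directed path of positive length from x to y in D^+ *)
Definition anc (x y : T) : Prop :=
  exists p, [/\ p <> [::], dwalk x p & last x p = y].

Definition sdom (x v : T) : Prop :=
  [/\ x <> s, v <> x &
      forall p, dwalk s p -> last s p = x -> v \in s :: p].

Definition tdom (x v : T) : Prop :=
  [/\ x <> t, v <> x &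
      forall p, dwalk x p -> last x p = t -> v \in x :: p].

Definition isIs (x z : T) : Prop :=
  sdom x z /\ forall v, sdom x v -> v <> z -> sdom z v.

Definition isIt (x z : T) : Prop :=
  tdom x z /\ forall v, tdom x v -> v <> z -> tdom z v.

Definition inC (x v : T) : Prop :=
  exists z, [/\ isIs x z, anc z v & anc v x].

Local Open Scope ereal_scope.

Definition g (x y : T) : \bar R :=
  if `[< x <> s /\ inC x y /\ exists z, isIt y z /\ anc x z >]
  then (d y x)%:E else +oo.

Definition gstar (x : T) : \bar R :=
  \big[Order.min/+oo]_(y | `[< inD y >]) g x y.

End SPDAG.

From Pilot Require Import Defs.
From HB Require Import structures.
From mathcomp Require Import all_boot all_order all_algebra.
From mathcomp Require Import boolp classical_sets reals constructive_ereal.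
From mathcomp Require Import lra.
Import Order.TTheory GRing.Theory Num.Theory.
Local Open Scope ring_scope.
Set Implicit Arguments. Unset Strict Implicit.

(* Every arc of D^+ lies on a shortest st-path, so along D^+ the distance
   between two vertices is the difference of their distances from s.
   Let z = I_s(v_j), let y' be a vertex of C(v_j) realising g*(v_j), and let
   u ≺ y with g(v_i,u) finite. As z dominates v_j and u ≺ v_j, either z ≺ u
   or d_s(u) <= d_s(z) < d_s(y'). In the second case
   g*(v_j) <= d_s(v_j) - d_s(y') <= d_s(v_i) - d_s(u) = g(v_i,u).
   In the first case u lies in C(v_j); moreover I_t(u) lies beyond v_i, hence
   strictly farther from s than v_j, so the walk u -> v_j -> t forces
   v_j ≺ I_t(u). Thus g*(v_j) <= g(v_j,u) = d_s(v_j) - d_s(u) <= g(v_i,u). *)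

Section ShortestPathDAG.
Variables (R : realType) (T : finType) (adj : rel T) (w : T -> T -> R)
          (d : T -> T -> R) (s t : T).
Hypothesis w_pos : forall x y, adj x y -> 0 < w x y.
Hypothesis d_sp : is_sp_dist adj w d.

Local Notation wlen := (Defs.wlen w).
Local Notation shortest_st := (Defs.shortest_st adj w d s t).
Local Notation inD := (Defs.inD adj w d s t).
Local Notation arc := (Defs.arc adj w d s t).
Local Notation dwalk := (Defs.dwalk adj w d s t).
Local Notation anc := (Defs.anc adj w d s t).
Local Notation sdom := (Defs.sdom adj w d s t).
Local Notation tdom := (Defs.tdom adj w d s t).
Local Notation isIs := (Defs.isIs adj w d s t).
Local Notation isIt := (Defs.isIt adj w d s t).
Local Notation inC := (Defs.inC adj w d s t).
Local Notation g := (Defs.g adj w d s t).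
Local Notation gstar := (Defs.gstar adj w d s t).

Lemma wlen_cat x p q : wlen x (p ++ q) = wlen x p + wlen (last x p) q.
Proof. by elim: p x => [|a p IH] x /=; rewrite ?add0r // IH addrA. Qed.

Lemma wlen_ge0 x p : path adj x p -> 0 <= wlen x p.
Proof.
elim: p x => [|a p IH] x //= /andP [hxa hp].
by rewrite addr_ge0 ?IH // ltW // w_pos.
Qed.

Lemma wlen_gt0 x p : p <> [::] -> path adj x p -> 0 < wlen x p.
Proof.
case: p => [//|a p] _ /= /andP [hxa hp].
by rewrite ltr_wpDr ?wlen_ge0 ?w_pos.
Qed.

Lemma dist_le_wlen x p : path adj x p -> d x (last x p) <= wlen x p.
Proof. by move=> hp; have [hle _] := d_sp x (last x p); apply: hle. Qed.

Lemma ds_last_le x p : path adj x p -> d s (last x p) <= d s x + wlen x p.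
Proof.
move=> hp; have [_ [P [hP hl hw]]] := d_sp s x.
have := @dist_le_wlen s (P ++ p).
by rewrite cat_path last_cat hl hP hp wlen_cat hl hw; apply.
Qed.

Lemma ds_triangle x y : d s y <= d s x + d x y.
Proof.
have [_ [P [hP hl hw]]] := d_sp x y.
by have := ds_last_le hP; rewrite hl hw.
Qed.

Lemma cons_eq_cat_cons (p q1 q2 : seq T) a : s :: p = q1 ++ a :: q2 ->
  exists2 p1, p = p1 ++ q2 & last s p1 = a.
Proof.
case: q1 => [|x q1] /= [-> ->]; first by exists [::].
by exists (rcons q1 a); rewrite ?cat_rcons ?last_rcons.
Qed.

Lemma dwalk_cat x p q : dwalk x (p ++ q) <-> dwalk x p /\ dwalk (last x p) q.
Proof.
elim: p x => [|a p IH] x /=; first by split=> // [[]].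
by rewrite IH; tauto.
Qed.

Lemma shortest_st_dwalk p q1 v q2 :
  shortest_st p -> s :: p = q1 ++ v :: q2 -> dwalk v q2.
Proof.
move=> hp; elim: q2 q1 v => [//|b q2 IH] q1 v E /=; split.
  by exists p, q1, q2.
by apply: (IH (rcons q1 v)); rewrite E cat_rcons.
Qed.

Lemma arc_ds a b : arc a b -> adj a b /\ d s b = d s a + w a b.
Proof.
move=> [p [q1 [q2 [[hpath hlast hw] E]]]].
have [p1 Ep hl] := cons_eq_cat_cons E.
move: hpath hlast hw; rewrite Ep cat_path last_cat wlen_cat hl /=.
move=> /and3P [hp1 hab hq2] hlast hw; split=> //.
have ha := dist_le_wlen hp1; rewrite hl in ha.
have hb := @dist_le_wlen s (rcons p1 b).
rewrite -cats1 cat_path hp1 hl /= hab last_cat wlen_cat hl /= addr0 in hb.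
have hbt := ds_last_le hq2; rewrite hlast in hbt.
have hat := @ds_last_le a (b :: q2); rewrite /= hab hq2 hlast in hat.
by have := hb isT; have := hat isT; lra.
Qed.

Lemma arc_inD a b : arc a b -> inD a /\ inD b.
Proof.
move=> [p [q1 [q2 [hp E]]]].
by split; exists p; split; rewrite // E mem_cat !in_cons eqxx !orbT.
Qed.

Lemma dwalk_path x p : dwalk x p -> path adj x p.
Proof.
by elim: p x => [//|b p IH] x /= [/arc_ds [hxb _] /IH hp]; rewrite hxb hp.
Qed.

Lemma dwalk_ds x p : dwalk x p -> d s (last x p) = d s x + wlen x p.
Proof.
elim: p x => [|b p IH] x /= => [_|[/arc_ds [_ hb] /IH ->]]; first by rewrite addr0.
by rewrite hb addrA.
Qed.

Lemma dwalk_inD x p : dwalk x p -> inD x -> inD (last x p).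
Proof.
by elim: p x => [//|b p IH] x /= [/arc_inD [_ hb] /IH hp] _; apply: hp.
Qed.

Lemma anc_ds_lt a b : anc a b -> d s a < d s b.
Proof.
move=> [p [hne hw <-]]; rewrite dwalk_ds // ltrDl.
exact: wlen_gt0 (dwalk_path hw).
Qed.

Lemma anc_dist a b : anc a b -> d a b = d s b - d s a.
Proof.
move=> [p [_ hw hl]]; have hd := dwalk_ds hw.
have hle := dist_le_wlen (dwalk_path hw).
rewrite hl in hd hle; have := ds_triangle a b; lra.
Qed.

Lemma anc_trans a b c : anc a b -> anc b c -> anc a c.
Proof.
move=> [p [hp hw hl]] [q [_ hw' hl']]; exists (p ++ q); split.
- by case: p hp {hw hl}.
- by apply/dwalk_cat; rewrite hl.
- by rewrite last_cat hl.
Qed.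

Lemma anc_inD a b : anc a b -> inD a /\ inD b.
Proof.
move=> [p [hne hw <-]]; case: p hne hw => [//|c p] _ /= [hac hw].
have [ha hc] := arc_inD hac.
by split=> //; apply: dwalk_inD.
Qed.

Lemma inD_dwalk_from_s v : inD v -> exists2 p, dwalk s p & last s p = v.
Proof.
move=> [p [hp hv]]; case/splitPr E: (s :: p) / hv => [q1 q2].
have [p1 Ep hl] := cons_eq_cat_cons E.
have := shortest_st_dwalk (q1 := [::]) hp (erefl (s :: p)).
by rewrite Ep dwalk_cat => -[hw _]; exists p1.
Qed.

Lemma inD_dwalk_to_t v : inD v -> exists2 p, dwalk v p & last v p = t.
Proof.
move=> [p [hp hv]]; case/splitPr E: (s :: p) / hv => [q1 q2].
have [p1 Ep hl] := cons_eq_cat_cons E; have [_ hlast _] := hp.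
exists q2; first exact: shortest_st_dwalk hp E.
by move: hlast; rewrite Ep last_cat hl.
Qed.

Lemma mem_dwalk_anc x p z : dwalk x p -> z \in p -> anc x z.
Proof.
elim: p x => [//|b p IH] x /= [hxb hw]; have hanc : anc x b by exists [:: b].
by rewrite in_cons => /orP [/eqP ->|/(IH _ hw)/(anc_trans hanc)].
Qed.

Lemma mem_dwalk_anc_last x p z : dwalk x p -> z \in x :: p ->
  z = last x p \/ anc z (last x p).
Proof.
elim: p x => [|b p IH] x /=; first by rewrite mem_seq1 => _ /eqP ->; left.
move=> [hxb hw]; rewrite in_cons => /orP [/eqP ->|/(IH _ hw)//].
by right; exists (b :: p).
Qed.

Lemma mem_dwalk_cat x p q z : dwalk x (p ++ q) -> z \in x :: p ++ q ->
  [\/ anc z (last x p), z = last x p | anc (last x p) z].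
Proof.
move=> /dwalk_cat [hp hq]; rewrite -cat_cons mem_cat => /orP [hz|hz].
  by have [->|?] := mem_dwalk_anc_last hp hz; [constructor 2 | constructor 1].
by constructor 3; apply: mem_dwalk_anc hq hz.
Qed.

Lemma sdom_anc_cases x z u : sdom x z -> anc u x ->
  anc z u \/ d s u <= d s z.
Proof.
move=> [_ _ hdom] hux; have [p [_ hw hl]] := hux.
have [p0 hw0 hl0] := inD_dwalk_from_s (proj1 (anc_inD hux)).
have hw' : dwalk s (p0 ++ p) by apply/dwalk_cat; rewrite hl0.
have := hdom _ hw'; rewrite last_cat hl0 => /(_ hl)/(mem_dwalk_cat hw').
rewrite hl0 => -[|->|/anc_ds_lt/ltW]; by [left | right].
Qed.

Lemma tdom_anc_cases u z x : tdom u z -> anc u x ->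
  anc x z \/ d s z <= d s x.
Proof.
move=> [_ _ hdom] hux; have [p [_ hw hl]] := hux.
have [q hwq hlq] := inD_dwalk_to_t (proj2 (anc_inD hux)).
have hw' : dwalk u (p ++ q) by apply/dwalk_cat; rewrite hl.
have := hdom _ hw'; rewrite last_cat hl => /(_ hlq)/(mem_dwalk_cat hw').
rewrite hl => -[/anc_ds_lt/ltW|->|]; by [right | left].
Qed.

Local Open Scope ereal_scope.

Lemma gE x u : x <> s -> inC x u -> (exists z, isIt u z /\ anc x z) ->
  g x u = (d u x)%:E.
Proof. by move=> hx hC hIt; rewrite /Defs.g asboolT. Qed.

Lemma g_finite x u : g x u != +oo ->
  [/\ x <> s, inC x u, exists z, isIt u z /\ anc x z & g x u = (d u x)%:E].
Proof. by rewrite /Defs.g; case: asboolP => // -[hx [hC hIt]]. Qed.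

Lemma gstar_le_g x u : inD u -> gstar x <= g x u.
Proof.
move=> hu; rewrite /Defs.gstar (bigD1 u) /=; last exact/asboolP.
by rewrite ge_min lexx.
Qed.

Lemma gstar_finite x : gstar x != +oo ->
  exists z y, [/\ isIs x z, anc z y, anc y x & gstar x <= (d y x)%:E].
Proof.
move=> hx; have [y [hy hgy]] : exists y, inD y /\ g x y != +oo.
  apply: contrapT => hn; move/eqP: hx; apply.
  rewrite /Defs.gstar big1 // => y /asboolP hy.
  by case: (g x y =P +oo) => // /eqP hgy; case: hn; exists y.
have [_ [z [hz hzy hyx]] _ hgE] := g_finite hgy.
by exists z, y; split=> //; rewrite -hgE gstar_le_g.
Qed.

End ShortestPathDAG.

Theorem lemma9 (R : realType) (T : finType) (adj : rel T) (w : T -> T -> R)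
    (d : T -> T -> R) (s t : T)
    (adj_sym : symmetric adj) (adj_irr : irreflexive adj)
    (w_pos : forall x y, adj x y -> 0 < w x y)
    (w_sym : forall x y, adj x y -> w x y = w y x)
    (d_sp : is_sp_dist adj w d)
    (y vi vj : T)
    (hy : inD adj w d s t y)
    (hvi : anc adj w d s t y vi) (hvj : anc adj w d s t y vj)
    (hd : d s vj <= d s vi)
    (hfin : gstar adj w d s t vj != +oo%E) :
  (gstar adj w d s t vj <=
     \big[Order.min/+oo%E]_(u | `[< anc adj w d s t u y >]) g adj w d s t vi u)%E.
Proof.
have [z [y' [hz hzy' hy'vj hgy']]] := gstar_finite hfin.
apply: (big_ind (fun v => gstar adj w d s t vj <= v)%E) => [|a b ha hb|u /asboolP hu].
- exact: leey.
- by rewrite le_min ha hb.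
have [->|/g_finite [_ [_ [_ _ huvi]] [z' [hz' hviz']] ->]] :=
  eqVneq (g adj w d s t vi u) +oo%E; first exact: leey.
have huvj := anc_trans hu hvj.
have [hzu|huz] := sdom_anc_cases w_pos d_sp hz.1 huvj; last first.
  apply: le_trans hgy' _.
  rewrite lee_fin (anc_dist d_sp hy'vj) (anc_dist d_sp huvi).
  by have := anc_ds_lt w_pos d_sp hzy'; lra.
have hvjz' : anc adj w d s t vj z'.
  have [//|] := tdom_anc_cases w_pos d_sp hz'.1 huvj.
  by have := anc_ds_lt w_pos d_sp hviz'; lra.
have [[hvjs _ _] _] := hz.
have huC : inC adj w d s t vj u by exists z.
apply: le_trans (gstar_le_g vj (proj1 (anc_inD hu))) _.
rewrite gE //; last by exists z'.
by rewrite lee_fin (anc_dist d_sp huvj) (anc_dist d_sp huvi); lra.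
Qed.
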